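(* Let $M$ be a left cancellative monoid which is strongly $\delta$-hyperbolic (for some real $\delta \geq 0$) with respect to some finite generating set. Then $M$ is finitely presented, and (any finite presentation of) $M$ has Dehn function bounded above by a polynomial of degree $\log_{4/3} 5 + 1$.
   Context: Directed graphs may have loops and multiple edges. For vertices $u,v$ of a directed graph, $d(u,v)$ is the length of a shortest directed path from $u$ to $v$, or $\infty$ if there is none. The out-ball is $\overrightarrow{\mathcal{B}}_r(x)=\{y : d(x,y)\le r\}$ and the in-ball is $\overleftarrow{\mathcal{B}}_r(x)=\{y : d(y,x)\le r\}$; for a set $S$ of vertices these denote the unions over $x\in S$. A path of length $n$ is a sequence $[x_0,\dots,x_n]$ of vertices with an edge from $x_i$ to $x_{i+1}$ for each $i$; it is a geodesic if $n=d(x_0,x_n)$. Paths $p,q$ are composable if the end of $p$ is the start of $q$ (then $p\circ q$ is their concatenation), and parallel if they have the same start and the same end. A directed geodesic triangle is an ordered triple $(p,q,r)$ of geodesics with $p,q$ composable and $p\circ q$ parallel to $r$. It is $\delta$-thin if (identifying a path with its vertex set) every vertex of $r$ lies in $\overrightarrow{\mathcal{B}}_\delta(p)\cup\overleftarrow{\mathcal{B}}_\delta(q)$, every vertex of $p$ lies in $\overrightarrow{\mathcal{B}}_\delta(r)\cup\overleftarrow{\mathcal{B}}_\delta(q)$, and every vertex of $q$ lies in $\overrightarrow{\mathcal{B}}_\delta(p)\cup\overleftarrow{\mathcal{B}}_\delta(r)$. A directed graph is strongly $\delta$-hyperbolic if all its directed geodesic triangles are $\delta$-thin. For a monoid $M$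 generated by a finite set $A$, the right Cayley graph has vertex set $M$ and an edge from $m$ to $n$ for each $a\in A$ with $ma=n$; $M$ is strongly $\delta$-hyperbolic with respect to $A$ if this graph is strongly $\delta$-hyperbolic. For a monoid presentation $\langle A\mid R\rangle$ and words $u,v$ equal in the monoid, the area $A(u,v)$ is the least number of applications of relations from $R$ needed to transform $u$ into $v$; the Dehn function is $n\mapsto\max\{A(u,v) : u,v\in A^*, u=v \text{ in the monoid}, |u|+|v|\le n\}$. Dehn functions are compared up to the equivalence $f\sim g$ where $f\prec g$ means $f(j)\le a g(aj)+aj$ for some constant $a$ and all $j$; Dehn functions of different finite presentations of the same monoid are equivalent. *)

From Stdlib Require Import Reals.
From Stdlib Require List.
From mathcomp Require Import all_boot.

Set Implicit Arguments.
Unset Strict Implicit.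
Unset Printing Implicit Defensive.

Record monoid := Monoid {
  mcar :> Type;
  mmul : mcar -> mcar -> mcar;
  mone : mcar;
  mmulA : forall x y z, mmul x (mmul y z) = mmul (mmul x y) z;
  mmul1 : forall x, mmul mone x = x;
  mmulm1 : forall x, mmul x mone = x }.

Definition left_cancellative (M : monoid) : Prop :=
  forall m a b : M, mmul m a = mmul m b -> a = b.

Definition evalw (M : monoid) (B : Type) (gen : B -> M) (w : seq B) : M :=
  foldr (fun b m => mmul (gen b) m) (mone M) w.

Definition generates (M : monoid) (A : finType) (gen : A -> M) : Prop :=
  forall m : M, exists w : seq A, evalw gen w = m.

Section Cayley.
Variables (M : monoid) (A : finType) (gen : A -> M).

Definition cedge (x y : M) : Prop := exists a : A, mmul x (gen a) = y.

Fixpoint cpath (x : M) (s : seq M) : Prop :=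
  match s with
  | [::] => True
  | y :: s' => cedge x y /\ cpath y s'
  end.

(* A path [x_0,...,x_n] is represented as (x_0, [x_1;...;x_n]). *)
Definition gpath := (M * seq M)%type.
Definition pstart (p : gpath) : M := p.1.
Definition pend (p : gpath) : M := last p.1 p.2.
Definition plen (p : gpath) : nat := size p.2.
Definition verts (p : gpath) : seq M := p.1 :: p.2.

Definition dist_le (x y : M) (n : nat) : Prop :=
  exists s, cpath x s /\ last x s = y /\ (size s <= n)%N.

Definition geodesic (p : gpath) : Prop :=
  cpath p.1 p.2 /\
  forall s, cpath p.1 s -> last p.1 s = pend p -> (plen p <= size s)%N.

Definition in_out_ball (delta : R) (p : gpath) (y : M) : Prop :=
  exists x, List.In x (verts p) /\ exists n : nat, Rle (INR n) delta /\ dist_le x y n.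

Definition in_in_ball (delta : R) (p : gpath) (y : M) : Prop :=
  exists x, List.In x (verts p) /\ exists n : nat, Rle (INR n) delta /\ dist_le y x n.

Definition geodesic_triangle (p q r : gpath) : Prop :=
  geodesic p /\ geodesic q /\ geodesic r /\
  pend p = pstart q /\ pstart r = pstart p /\ pend r = pend q.

Definition thin_triangle (delta : R) (p q r : gpath) : Prop :=
  (forall v, List.In v (verts r) -> in_out_ball delta p v \/ in_in_ball delta q v) /\
  (forall v, List.In v (verts p) -> in_out_ball delta r v \/ in_in_ball delta q v) /\
  (forall v, List.In v (verts q) -> in_out_ball delta p v \/ in_in_ball delta r v).

Definition strongly_hyperbolic (delta : R) : Prop :=
  forall p q r, geodesic_triangle p q r -> thin_triangle delta p q r.

End Cayley.

Section Presentations.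
Variable B : Type.

Definition one_step (R : seq (seq B * seq B)) (u v : seq B) : Prop :=
  exists (x y l r : seq B),
    (List.In (l, r) R \/ List.In (r, l) R) /\ u = x ++ l ++ y /\ v = x ++ r ++ y.

Inductive derives (R : seq (seq B * seq B)) : nat -> seq B -> seq B -> Prop :=
  | derives0 u : derives R 0 u u
  | derivesS k u v w : one_step R u v -> derives R k v w -> derives R k.+1 u w.

Definition area_le (R : seq (seq B * seq B)) (u v : seq B) (k : nat) : Prop :=
  exists k', (k' <= k)%N /\ derives R k' u v.

End Presentations.

(* A finite monoid presentation <B | R> of M: B finite, R finite, and the
   map B* -> M induced by pgen is surjective with kernel the congruence
   generated by R. *)
Record fin_presentation (M : monoid) := FinPresentation {
  palph : finType;
  pgen : palph -> M;
  prels : seq (seq palph * seq palph);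
  pgen_surj : forall m : M, exists w, evalw pgen w = m;
  pker : forall u v : seq palph,
           evalw pgen u = evalw pgen v <-> exists k, derives prels k u v }.

(* The Dehn function D of P satisfies D ≺ g, i.e. D(j) <= a g(a j) + a j.
   Written out: every area A(u,v) with |u|+|v| <= j is at most that bound. *)
Definition dehn_prec (M : monoid) (P : fin_presentation M) (g : R -> R) : Prop :=
  exists a : R, Rlt 0 a /\
    forall (j : nat) (u v : seq (palph P)),
      (size u + size v <= j)%N -> evalw (pgen (f:=P)) u = evalw (pgen (f:=P)) v ->
      exists k : nat, area_le (prels P) u v k /\
        Rle (INR k) (Rplus (Rmult a (g (Rmult a (INR j)))) (Rmult a (INR j))).

Definition dehn_exponent : R := Rplus (Rdiv (ln (INR 5)) (ln (Rdiv (INR 4) (INR 3)))) (INR 1).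

(* Choose an integer dd >= delta and present M by all relations u = v between
   words of length at most short_len dd.  The heart of the proof is that a
   triangle of geodesic words p, q, r with p q = r in M has area at most n^6,
   n = |p| + |q| + |r|.  Strong induction on n: cut the longest side at its
   midpoint; thinness, transported to words through left cancellation (which
   makes every translate of a geodesic word a geodesic path), yields a
   geodesic word of length at most dd from the midpoint to another side, which
   splits the triangle into at most three geodesic triangles, each of
   perimeter at most 6n/7 and of total perimeter at most 2.1 n; as
   (6/7)^5 * 2.1 < 1 their sixth powers sum to at most n^6.  Reducing an
   arbitrary word to a geodesic one by halving then gives area O(n^6) for
   every relation, and 6 <= log_{4/3} 5 + 1.  Finally, such a bound passes
   to any other finite presentation by rewriting generators into each other. *)

From Stdlib Require Import Reals Classical Lia Lra.
From Stdlib Require ClassicalEpsilon.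
From mathcomp Require Import all_boot zify.

Set Implicit Arguments.
Unset Strict Implicit.
Unset Printing Implicit Defensive.

Section Area.
Variables (B : Type) (Rl : seq (seq B * seq B)).
Implicit Types (p q r c s e u v w x y : seq B).

Lemma derives_trans k1 k2 u v w :
  derives Rl k1 u v -> derives Rl k2 v w -> derives Rl (k1 + k2) u w.
Proof. by elim=> // k u0 v0 w0 Huv _ IH /IH; apply: derivesS. Qed.

Lemma one_step_sym u v : one_step Rl u v -> one_step Rl v u.
Proof. by case=> x [y [l [r [Hlr [-> ->]]]]]; exists x, y, r, l; split=> //; tauto. Qed.

Lemma derives_sym k u v : derives Rl k u v -> derives Rl k v u.
Proof.
elim=> [u0 | k0 u0 v0 w0 Huv _ IH]; first exact: derives0.
by rewrite -addn1; apply: derives_trans IH (derivesS (one_step_sym Huv) (derives0 _ _)).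
Qed.

Lemma derives_cat k x y u v :
  derives Rl k u v -> derives Rl k (x ++ u ++ y) (x ++ v ++ y).
Proof.
elim=> [u0 | k0 u0 v0 w0 [x0 [y0 [l [r [Hlr [-> ->]]]]]] _ IH]; first exact: derives0.
apply: derivesS IH; exists (x ++ x0), (y0 ++ y), l, r.
by split=> //; rewrite -!catA.
Qed.

Lemma area_le_refl u : area_le Rl u u 0.
Proof. by exists 0; split=> //; apply: derives0. Qed.

Lemma area_le_trans k1 k2 u v w :
  area_le Rl u v k1 -> area_le Rl v w k2 -> area_le Rl u w (k1 + k2).
Proof.
case=> [a [Ha Da]] [b [Hb Db]]; exists (a + b).
by split; [exact: leq_add | exact: derives_trans Da Db].
Qed.

Lemma area_le_sym k u v : area_le Rl u v k -> area_le Rl v u k.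
Proof. by case=> [a [Ha Da]]; exists a; split=> //; apply: derives_sym. Qed.

Lemma area_le_mono k k' u v : k <= k' -> area_le Rl u v k -> area_le Rl u v k'.
Proof. by move=> Hk [a [Ha Da]]; exists a; split=> //; apply: leq_trans Hk. Qed.

Lemma area_le_cat k x y u v :
  area_le Rl u v k -> area_le Rl (x ++ u ++ y) (x ++ v ++ y) k.
Proof. by case=> [a [Ha Da]]; exists a; split=> //; apply: derives_cat. Qed.

Lemma area_le_catl k x u v : area_le Rl u v k -> area_le Rl (x ++ u) (x ++ v) k.
Proof. by move/(area_le_cat x [::]); rewrite !cats0. Qed.

Lemma area_le_catr k y u v : area_le Rl u v k -> area_le Rl (u ++ y) (v ++ y) k.
Proof. exact: (@area_le_cat _ [::] y). Qed.

Lemma area_le_cut_p_r p q r c s i j kA kB kC :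
  area_le Rl (take i p ++ c) (take j r) kA ->
  area_le Rl (drop i p ++ q) s kB ->
  area_le Rl (c ++ drop j r) s kC ->
  area_le Rl (p ++ q) r (kA + kB + kC).
Proof.
move=> HA HB HC; rewrite -(cat_take_drop i p) -catA -(cat_take_drop j r).
rewrite (addnC kA) -addnA; apply: area_le_trans (area_le_catl _ HB) _.
rewrite addnC; apply: area_le_trans (area_le_catl _ (area_le_sym HC)) _.
by rewrite catA; apply: area_le_catr.
Qed.

Lemma area_le_cut_r_p p q r c s i j kA kB kC :
  area_le Rl (take j r ++ c) (take i p) kA ->
  area_le Rl (c ++ drop i p) s kB ->
  area_le Rl (s ++ q) (drop j r) kC ->
  area_le Rl (p ++ q) r (kA + kB + kC).
Proof.
move=> HA HB HC; rewrite -(cat_take_drop i p) -catA -(cat_take_drop j r).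
rewrite -addnA; apply: area_le_trans (area_le_catr _ (area_le_sym HA)) _.
rewrite -catA (catA c); apply: area_le_trans (area_le_catl _ (area_le_catr _ HB)) _.
exact: area_le_catl.
Qed.

Lemma area_le_cut_r_q p q r c s t j kA kB kC :
  area_le Rl (p ++ take t q) s kA ->
  area_le Rl (take j r ++ c) s kB ->
  area_le Rl (c ++ drop t q) (drop j r) kC ->
  area_le Rl (p ++ q) r (kA + kB + kC).
Proof.
move=> HA HB HC; rewrite -(cat_take_drop t q) catA -(cat_take_drop j r).
apply: area_le_trans (area_le_trans (area_le_catr _ HA) (area_le_catr _ (area_le_sym HB))) _.
by rewrite -catA; apply: area_le_catl.
Qed.

Lemma area_le_cut_q_r p q r c s t j kA kB kC :
  area_le Rl (take t q ++ c) s kA ->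
  area_le Rl (p ++ s) (take j r) kB ->
  area_le Rl (c ++ drop j r) (drop t q) kC ->
  area_le Rl (p ++ q) r (kA + kB + kC).
Proof.
move=> HA HB HC; rewrite -(cat_take_drop t q) -(cat_take_drop j r).
rewrite addnC; apply: area_le_trans (area_le_catl _ (area_le_catl _ (area_le_sym HC))) _.
rewrite (catA (take t q)); apply: area_le_trans (area_le_catl _ (area_le_catr _ HA)) _.
by rewrite catA; apply: area_le_catr.
Qed.

Lemma area_le_cut_p_q_left p q r c s i t kA kB kC :
  area_le Rl (drop i p ++ take t q) c kA ->
  area_le Rl (take i p ++ c) s kB ->
  area_le Rl (s ++ drop t q) r kC ->
  area_le Rl (p ++ q) r (kA + kB + kC).
Proof.
move=> HA HB HC; rewrite -(cat_take_drop i p) -(cat_take_drop t q) -catA (catA (drop i p)).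
apply: area_le_trans (area_le_trans (area_le_cat _ _ HA) _) HC.
by rewrite catA; apply: area_le_catr.
Qed.

Lemma area_le_cut_p_q_right p q r c e i t kA kB kC :
  area_le Rl (drop i p ++ take t q) c kA ->
  area_le Rl (c ++ drop t q) e kB ->
  area_le Rl (take i p ++ e) r kC ->
  area_le Rl (p ++ q) r (kA + kB + kC).
Proof.
move=> HA HB HC; rewrite -(cat_take_drop i p) -(cat_take_drop t q) -catA (catA (drop i p)).
apply: area_le_trans (area_le_trans (area_le_cat _ _ HA) _) HC.
exact: area_le_catl.
Qed.

Lemma area_le_cut_p p q r e i kA kB :
  area_le Rl (drop i p ++ q) e kA ->
  area_le Rl (take i p ++ e) r kB ->
  area_le Rl (p ++ q) r (kA + kB).
Proof.
move=> HA HB; rewrite -(cat_take_drop i p) -catA.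
exact: area_le_trans (area_le_catl _ HA) HB.
Qed.

End Area.

Section Evaluation.
Variables (M : monoid) (B : Type) (gen : B -> M).
Local Notation ev := (evalw gen).

Lemma evalw_cat u v : ev (u ++ v) = mmul (ev u) (ev v).
Proof. by elim: u => [|a u IH] /=; rewrite ?mmul1 // IH mmulA. Qed.

Lemma derives_evalw (Rl : seq (seq B * seq B)) k u v :
  (forall l r, List.In (l, r) Rl -> ev l = ev r) -> derives Rl k u v -> ev u = ev v.
Proof.
move=> HRl; elim=> // k0 u0 v0 w0 [x [y [l [r [Hlr [-> ->]]]]]] _ <-.
by rewrite !evalw_cat; case: Hlr => /HRl ->.
Qed.

End Evaluation.

Section Words.
Variables (M : monoid) (A : finType) (gen : A -> M).
Local Notation ev := (evalw gen).

Definition geodesic_word (w : seq A) := forall w', ev w' = ev w -> size w <= size w'.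

Lemma geodesic_word_take i w : geodesic_word w -> geodesic_word (take i w).
Proof.
move=> Gw w' E; have := Gw (w' ++ drop i w).
rewrite !evalw_cat E -evalw_cat cat_take_drop size_cat => /(_ erefl).
by rewrite -{1}(cat_take_drop i w) size_cat leq_add2r.
Qed.

Lemma geodesic_word_drop i w : geodesic_word w -> geodesic_word (drop i w).
Proof.
move=> Gw w' E; have := Gw (take i w ++ w').
rewrite !evalw_cat E -evalw_cat cat_take_drop size_cat => /(_ erefl).
by rewrite -{1}(cat_take_drop i w) size_cat leq_add2l.
Qed.

Lemma geodesic_word_split i w : geodesic_word w -> i <= size w ->
  [/\ geodesic_word (take i w), geodesic_word (drop i w),
      size (take i w) = i & size (drop i w) = size w - i].
Proof.
by move=> Gw Hi; split; rewrite ?size_drop ?size_takel //;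
  [apply: geodesic_word_take | apply: geodesic_word_drop].
Qed.

Lemma exists_geodesic_word w :
  exists g, [/\ geodesic_word g, ev g = ev w & size g <= size w].
Proof.
move: {2}(size w) (leqnn (size w)) => n; elim: n w => [|n IH] w Hw.
  by exists w; split=> // w' _; rewrite (leq_trans Hw).
have [Gw | nGw] := classic (geodesic_word w); first by exists w.
have [w' [E Hlt]] : exists w', ev w' = ev w /\ size w' < size w.
  apply: NNPP => Hno; apply: nGw => w' E.
  by rewrite leqNgt; apply/negP => Hlt; apply: Hno; exists w'.
have [g [Gg Eg Sg]] := IH w' (leq_trans Hlt Hw).
by exists g; split=> //; [rewrite Eg | rewrite (leq_trans Sg) // ltnW].
Qed.

Hypothesis LC : left_cancellative M.

Lemma evalw_lcancel x u v : ev (x ++ u) = ev (x ++ v) -> ev u = ev v.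
Proof. by rewrite !evalw_cat => /LC. Qed.

Fixpoint word_path (x : M) (w : seq A) : seq M :=
  if w is a :: w' then mmul x (gen a) :: word_path (mmul x (gen a)) w' else [::].

Lemma cpath_word_path x w : cpath gen x (word_path x w).
Proof. by elim: w x => [|a w IH] x //=; split; [exists a | exact: IH]. Qed.

Lemma last_word_path x w : last x (word_path x w) = mmul x (ev w).
Proof. by elim: w x => [|a w IH] x /=; rewrite ?mmulm1 // IH mmulA. Qed.

Lemma size_word_path x w : size (word_path x w) = size w.
Proof. by elim: w x => [|a w IH] x //=; rewrite IH. Qed.

Lemma In_word_path x w v : List.In v (x :: word_path x w) <->
  exists2 i, i <= size w & v = mmul x (ev (take i w)).
Proof.
elim: w x => [|a w IH] x.
  split=> [[<- | //] | [i _ ->]]; first by exists 0; rewrite /= ?mmulm1.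
  by left; rewrite /= mmulm1.
change (x = v \/ List.In v (mmul x (gen a) :: word_path (mmul x (gen a)) w) <->
  exists2 i, i <= (size w).+1 & v = mmul x (ev (take i (a :: w)))).
rewrite IH; split=> [[<- | [i Hi ->]] | [[|i] Hi ->]].
- by exists 0; rewrite /= ?mmulm1.
- by exists i.+1; rewrite //= mmulA.
- by left; rewrite /= mmulm1.
- by right; exists i; rewrite //= mmulA.
Qed.

Lemma cpath_word x s : cpath gen x s ->
  exists w, size w = size s /\ last x s = mmul x (ev w).
Proof.
elim: s x => [|y s IH] x /=; first by exists [::]; rewrite mmulm1.
case=> [[a <-] /IH [w [Hw ->]]].
by exists (a :: w); rewrite /= Hw mmulA.
Qed.

Lemma geodesic_word_path x w : geodesic_word w -> geodesic gen (x, word_path x w).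
Proof.
move=> Gw; split=> [|s Hs]; first exact: cpath_word_path.
have [w' [<- ->]] := cpath_word Hs.
rewrite /pend /plen /= size_word_path last_word_path => /LC E.
exact: Gw.
Qed.

End Words.

Section ThinTriangles.
Variables (M : monoid) (A : finType) (gen : A -> M).
Local Notation ev := (evalw gen).
Hypothesis LC : left_cancellative M.
Variables (delta : R) (dd : nat).
Hypothesis delta_le_dd : forall n : nat, Rle (INR n) delta -> n <= dd.
Hypothesis SH : strongly_hyperbolic gen delta.

Definition within (x y : M) :=
  exists c, [/\ geodesic_word gen c, size c <= dd & mmul x (ev c) = y].

Lemma within_of_dist_le x y n : Rle (INR n) delta -> dist_le gen x y n -> within x y.
Proof.
move=> /delta_le_dd Hn [s [/cpath_word [c [Hc Ec]] [Hs Hsn]]].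
have [g [Gg Eg Sg]] := exists_geodesic_word gen c.
exists g; split=> //; last by rewrite Eg -Ec.
by rewrite (leq_trans Sg) // Hc (leq_trans Hsn).
Qed.

Lemma in_out_ball_word_path x w y : in_out_ball gen delta (x, word_path gen x w) y ->
  exists2 i, i <= size w & within (mmul x (ev (take i w))) y.
Proof.
case=> v [/In_word_path [i Hi ->] [n [Hn Hd]]].
by exists i; last exact: within_of_dist_le Hd.
Qed.

Lemma in_in_ball_word_path x w y : in_in_ball gen delta (x, word_path gen x w) y ->
  exists2 i, i <= size w & within y (mmul x (ev (take i w))).
Proof.
case=> v [/In_word_path [i Hi ->] [n [Hn Hd]]].
by exists i; last exact: within_of_dist_le Hd.
Qed.

Definition word_triangle (p q r : seq A) :=
  [/\ geodesic_word gen p, geodesic_word gen q, geodesic_word gen r & ev (p ++ q) = ev r].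

Lemma word_triangle_size p q r : word_triangle p q r -> size r <= size p + size q.
Proof. by case=> _ _ Gr E; rewrite -size_cat; apply: Gr. Qed.

Lemma thin_triangle_words p q r : word_triangle p q r ->
  thin_triangle gen delta (mone M, word_path gen (mone M) p)
    (ev p, word_path gen (ev p) q) (mone M, word_path gen (mone M) r).
Proof.
case=> Gp Gq Gr E; apply: SH; do 3 (split; first exact: geodesic_word_path).
by rewrite /pend /pstart /= !last_word_path !mmul1 -E evalw_cat.
Qed.

Lemma In_word_path_take x w i :
  i <= size w -> List.In (mmul x (ev (take i w))) (x :: word_path gen x w).
Proof. by move=> Hi; apply/In_word_path; exists i. Qed.

Lemma thin_side_r p q r j : word_triangle p q r -> j <= size r ->
  (exists2 i, i <= size p & within (ev (take i p)) (ev (take j r))) \/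
  (exists2 t, t <= size q & within (ev (take j r)) (ev (p ++ take t q))).
Proof.
move=> T Hj; have [H _] := thin_triangle_words T.
case: (H _ (In_word_path_take (mone M) Hj))
  => [/in_out_ball_word_path | /in_in_ball_word_path] [k Hk W]; [left | right];
  by exists k; rewrite // ?evalw_cat; rewrite ?mmul1 in W.
Qed.

Lemma thin_side_p p q r i : word_triangle p q r -> i <= size p ->
  (exists2 j, j <= size r & within (ev (take j r)) (ev (take i p))) \/
  (exists2 t, t <= size q & within (ev (take i p)) (ev (p ++ take t q))).
Proof.
move=> T Hi; have [_ [H _]] := thin_triangle_words T.
case: (H _ (In_word_path_take (mone M) Hi))
  => [/in_out_ball_word_path | /in_in_ball_word_path] [k Hk W]; [left | right];
  by exists k; rewrite // ?evalw_cat; rewrite ?mmul1 in W.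
Qed.

Lemma thin_side_q p q r t : word_triangle p q r -> t <= size q ->
  (exists2 i, i <= size p & within (ev (take i p)) (ev (p ++ take t q))) \/
  (exists2 j, j <= size r & within (ev (p ++ take t q)) (ev (take j r))).
Proof.
move=> T Ht; have [_ [_ H]] := thin_triangle_words T.
case: (H _ (In_word_path_take (ev p) Ht))
  => [/in_out_ball_word_path | /in_in_ball_word_path] [k Hk W]; [left | right];
  by exists k; rewrite // ?evalw_cat; rewrite ?mmul1 in W.
Qed.

End ThinTriangles.

Lemma leq_exp2rW m n e : m <= n -> m ^ e <= n ^ e.
Proof. by move=> H; elim: e => // e IH; rewrite !expnS leq_mul. Qed.

Lemma scaled_expnS_le a b s n e :
  a * s <= b * n -> a ^ e * s ^ e.+1 <= b ^ e * (s * n ^ e).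
Proof.
move=> H; rewrite expnS mulnCA [b ^ e * _]mulnCA leq_mul2l -!expnMn.
by rewrite leq_exp2rW ?orbT.
Qed.

Lemma addn_expn_le a b k : 0 < k -> a ^ k + b ^ k <= (a + b) ^ k.
Proof.
case: k => // k _; rewrite !expnS mulnDl.
by apply: leq_add; apply: leq_mul; rewrite ?leq_exp2rW ?leq_addr ?leq_addl.
Qed.

Lemma sixth_powers_sum_le s1 s2 s3 n K :
  7 * s1 <= 6 * n -> 7 * s2 <= 6 * n -> 7 * s3 <= 6 * n ->
  s1 + s2 + s3 <= 2 * n + K -> 10 * K <= n ->
  s1 ^ 6 + s2 ^ 6 + s3 ^ 6 <= n ^ 6.
Proof.
move=> /(@scaled_expnS_le _ _ _ _ 5) H1 /(@scaled_expnS_le _ _ _ _ 5) H2.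
move=> /(@scaled_expnS_le _ _ _ _ 5) H3 Hs HK.
have Hsum : (s1 + s2 + s3) * n ^ 5 <= (2 * n + K) * n ^ 5 by rewrite leq_mul2r Hs orbT.
have HK' : (10 * (2 * n + K)) * n ^ 5 <= (21 * n) * n ^ 5 by rewrite leq_mul2r; lia.
move: H1 H2 H3 Hsum HK'; rewrite (expnS n 5); move: (n ^ 5) => X; nia.
Qed.

Lemma halves_sixth_powers_le a b n : a + b = n -> 4 * a <= 3 * n -> 4 * b <= 3 * n ->
  100 * a ^ 6 + 100 * b ^ 6 + (2 * n) ^ 6 <= 100 * n ^ 6.
Proof.
move=> Hab /(@scaled_expnS_le _ _ _ _ 5) Ha /(@scaled_expnS_le _ _ _ _ 5) Hb.
move: Ha Hb; rewrite expnMn (expnS n 5) -Hab; move: (n ^ 5) => X; nia.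
Qed.

(* Below this perimeter a triangle is a single relation; from it on, the
   slack 30 * dd + 30 (connector length plus rounding) is under n / 10. *)
Definition short_len (dd : nat) := 300 * dd + 301.

Section TriangleArea.
Variables (M : monoid) (A : finType) (gen : A -> M).
Local Notation ev := (evalw gen).
Hypothesis LC : left_cancellative M.
Variables (delta : R) (dd : nat).
Hypothesis delta_le_dd : forall n : nat, Rle (INR n) delta -> n <= dd.
Hypothesis SH : strongly_hyperbolic gen delta.
Variable Rl : seq (seq A * seq A).
Hypothesis area_short : forall u v, ev u = ev v ->
  size u <= short_len dd -> size v <= short_len dd -> area_le Rl u v 1.

Local Notation slack := (30 * dd + 30).
Local Notation word_triangle := (word_triangle gen).
Local Notation within := (within gen dd).

Definition perim (p q r : seq A) := size p + size q + size r.

Definition triangle_area_below n := forall p q r, word_triangle p q r ->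
  perim p q r < n -> area_le Rl (p ++ q) r (perim p q r ^ 6).

Section InductionStep.
Variable n : nat.
Hypothesis IH : triangle_area_below n.
Hypothesis n_large : short_len dd <= n.

Lemma area_le_three_triangles u v p1 q1 r1 p2 q2 r2 p3 q3 r3 :
  word_triangle p1 q1 r1 -> word_triangle p2 q2 r2 -> word_triangle p3 q3 r3 ->
  (forall k1 k2 k3, area_le Rl (p1 ++ q1) r1 k1 -> area_le Rl (p2 ++ q2) r2 k2 ->
     area_le Rl (p3 ++ q3) r3 k3 -> area_le Rl u v (k1 + k2 + k3)) ->
  6 * perim p1 q1 r1 <= 5 * n + slack -> 6 * perim p2 q2 r2 <= 5 * n + slack ->
  6 * perim p3 q3 r3 <= 5 * n + slack ->
  perim p1 q1 r1 + perim p2 q2 r2 + perim p3 q3 r3 <= 2 * n + slack ->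
  area_le Rl u v (n ^ 6).
Proof.
move=> T1 T2 T3 Hcut H1 H2 H3 Hs; move: n_large; rewrite /short_len => Hn.
have lt_n s : 6 * s <= 5 * n + slack -> s < n by lia.
apply: area_le_mono (Hcut _ _ _ (IH T1 (lt_n _ H1)) (IH T2 (lt_n _ H2)) (IH T3 (lt_n _ H3))).
apply: (sixth_powers_sum_le (K := slack)) => //; lia.
Qed.

Lemma area_le_two_triangles u v p1 q1 r1 p2 q2 r2 :
  word_triangle p1 q1 r1 -> word_triangle p2 q2 r2 ->
  (forall k1 k2, area_le Rl (p1 ++ q1) r1 k1 -> area_le Rl (p2 ++ q2) r2 k2 ->
     area_le Rl u v (k1 + k2)) ->
  6 * perim p1 q1 r1 <= 5 * n + slack -> 6 * perim p2 q2 r2 <= 5 * n + slack ->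
  perim p1 q1 r1 + perim p2 q2 r2 <= 2 * n + slack ->
  area_le Rl u v (n ^ 6).
Proof.
move=> T1 T2 Hcut H1 H2 Hs; move: n_large; rewrite /short_len => Hn.
have lt_n s : 6 * s <= 5 * n + slack -> s < n by lia.
apply: area_le_mono (Hcut _ _ (IH T1 (lt_n _ H1)) (IH T2 (lt_n _ H2))).
have := @sixth_powers_sum_le (perim p1 q1 r1) (perim p2 q2 r2) 0 n slack.
by rewrite exp0n // !addn0; apply; lia.
Qed.

Lemma area_le_halve_r_toward_p p q r i j :
  word_triangle p q r -> perim p q r = n -> size p <= size r -> size q <= size r ->
  2 * j <= size r <= 2 * j + 1 -> i <= size p ->
  within (ev (take i p)) (ev (take j r)) -> area_le Rl (p ++ q) r (n ^ 6).
Proof.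
rewrite /perim => T Hn Hpr Hqr Hj Hi [c [Gc Sc]]; rewrite -evalw_cat => Ec.
have [Gp Gq Gr E] := T; have Hr := word_triangle_size T.
have [Gtp Gdp Stp Sdp] := geodesic_word_split Gp Hi.
have Hjr : j <= size r by lia.
have [Gtr Gdr Str Sdr] := geodesic_word_split Gr Hjr.
have [s [Gs Es Ss]] := exists_geodesic_word gen (drop i p ++ q).
have Ec' : ev (c ++ drop j r) = ev s.
  apply: (evalw_lcancel LC (x := take i p)).
  rewrite catA evalw_cat Ec -evalw_cat cat_take_drop.
  by rewrite evalw_cat Es -evalw_cat catA cat_take_drop E.
have Hs := Gs _ Ec'; have Hc := Gtr _ Ec; rewrite !size_cat in Ss Hs Hc.
have TA : word_triangle (take i p) c (take j r) by [].
have TB : word_triangle (drop i p) q s by split; rewrite ?Es.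
have TC : word_triangle c (drop j r) s by [].
apply: (area_le_three_triangles TA TB TC) => [? ? ? HA HB HC | | | |];
  [exact: area_le_cut_p_r HA HB HC | rewrite /perim; lia..].
Qed.

Lemma area_le_halve_r_toward_q p q r j t :
  word_triangle p q r -> perim p q r = n -> size p <= size r -> size q <= size r ->
  2 * j <= size r <= 2 * j + 1 -> t <= size q ->
  within (ev (take j r)) (ev (p ++ take t q)) -> area_le Rl (p ++ q) r (n ^ 6).
Proof.
rewrite /perim => T Hn Hpr Hqr Hj Ht [c [Gc Sc]]; rewrite -evalw_cat => Ec.
have [Gp Gq Gr E] := T; have Hr := word_triangle_size T.
have [Gtq Gdq Stq Sdq] := geodesic_word_split Gq Ht.
have Hjr : j <= size r by lia.
have [Gtr Gdr Str Sdr] := geodesic_word_split Gr Hjr.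
have [s [Gs Es Ss]] := exists_geodesic_word gen (p ++ take t q).
have Ec1 : ev (take j r ++ c) = ev s by rewrite Ec Es.
have Ec2 : ev (c ++ drop t q) = ev (drop j r).
  apply: (evalw_lcancel LC (x := take j r)).
  by rewrite [in RHS]cat_take_drop catA evalw_cat Ec -evalw_cat -catA cat_take_drop E.
have Hs := Gs _ Ec1; have Hc := Gdr _ Ec2; rewrite !size_cat in Ss Hs Hc.
have TA : word_triangle p (take t q) s by split; rewrite ?Es.
have TB : word_triangle (take j r) c s by [].
have TC : word_triangle c (drop t q) (drop j r) by [].
apply: (area_le_three_triangles TA TB TC) => [? ? ? HA HB HC | | | |];
  [exact: area_le_cut_r_q HA HB HC | rewrite /perim; lia..].
Qed.

Lemma area_le_halve_p_toward_r p q r i j :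
  word_triangle p q r -> perim p q r = n -> size q <= size p -> size r < size p ->
  2 * i <= size p <= 2 * i + 1 -> j <= size r ->
  within (ev (take j r)) (ev (take i p)) -> area_le Rl (p ++ q) r (n ^ 6).
Proof.
rewrite /perim => T Hn Hqp Hrp Hi Hj [c [Gc Sc]]; rewrite -evalw_cat => Ec.
have [Gp Gq Gr E] := T; have Hr := word_triangle_size T.
have Hip : i <= size p by lia.
have [Gtp Gdp Stp Sdp] := geodesic_word_split Gp Hip.
have [Gtr Gdr Str Sdr] := geodesic_word_split Gr Hj.
have [s [Gs Es Ss]] := exists_geodesic_word gen (c ++ drop i p).
have Ep : ev (take j r ++ s) = ev p.
  by rewrite evalw_cat Es -evalw_cat catA evalw_cat Ec -evalw_cat cat_take_drop.
have Es' : ev (s ++ q) = ev (drop j r).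
  apply: (evalw_lcancel LC (x := take j r)).
  by rewrite [in RHS]cat_take_drop catA evalw_cat Ep -evalw_cat E.
have Hc := Gtp _ Ec; have Hs := Gdr _ Es'; rewrite !size_cat in Ss Hs Hc.
have TA : word_triangle (take j r) c (take i p) by [].
have TB : word_triangle c (drop i p) s by split; rewrite ?Es.
have TC : word_triangle s q (drop j r) by [].
apply: (area_le_three_triangles TA TB TC) => [? ? ? HA HB HC | | | |];
  [exact: area_le_cut_r_p HA HB HC | rewrite /perim; lia..].
Qed.

Lemma area_le_halve_p_toward_q p q r i t :
  word_triangle p q r -> perim p q r = n -> size q <= size p -> size r < size p ->
  2 * i <= size p <= 2 * i + 1 -> t <= size q ->
  within (ev (take i p)) (ev (p ++ take t q)) -> area_le Rl (p ++ q) r (n ^ 6).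
Proof.
rewrite /perim => T Hn Hqp Hrp Hi Ht [c [Gc Sc]]; rewrite -evalw_cat => Ec.
have [Gp Gq Gr E] := T; have Hr := word_triangle_size T.
have Hip : i <= size p by lia.
have [Gtp Gdp Stp Sdp] := geodesic_word_split Gp Hip.
have [Gtq Gdq Stq Sdq] := geodesic_word_split Gq Ht.
have Ec' : ev (drop i p ++ take t q) = ev c.
  by apply: (evalw_lcancel LC (x := take i p)); rewrite catA cat_take_drop Ec.
have [s [Gs Es Ss]] := exists_geodesic_word gen (p ++ take t q).
have Es1 : ev (take i p ++ c) = ev s by rewrite Ec Es.
have Es2 : ev (s ++ drop t q) = ev r.
  by rewrite evalw_cat Es -evalw_cat -catA cat_take_drop E.
have Hs := Gs _ Es1; have Hr' := Gr _ Es2; rewrite !size_cat in Ss Hs Hr'.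
have TA : word_triangle (drop i p) (take t q) c by [].
have [small | large] := leqP (6 * (i + size c + size s)) (5 * n + slack).
  have TB : word_triangle (take i p) c s by [].
  have TC : word_triangle s (drop t q) r by [].
  apply: (area_le_three_triangles TA TB TC) => [? ? ? HA HB HC | | | |];
    [exact: area_le_cut_p_q_left HA HB HC | rewrite /perim; lia..].
have [e [Ge Ee Se]] := exists_geodesic_word gen (drop i p ++ q).
have Ee1 : ev (c ++ drop t q) = ev e.
  by rewrite Ee evalw_cat -Ec' -evalw_cat -catA cat_take_drop.
have Ee2 : ev (take i p ++ e) = ev r.
  by rewrite evalw_cat Ee -evalw_cat catA cat_take_drop E.
have He := Ge _ Ee1; have Hr'' := Gr _ Ee2; rewrite !size_cat in Se He Hr''.
have TB : word_triangle (drop i p) q e by split; rewrite ?Ee.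
have TC : word_triangle (take i p) e r by [].
apply: (area_le_two_triangles TB TC) => [? ? HA HB | | |];
  [exact: area_le_cut_p HA HB | rewrite /perim; lia..].
Qed.

Lemma area_le_halve_q_toward_p p q r i t :
  word_triangle p q r -> perim p q r = n -> size p < size q -> size r < size q ->
  2 * t <= size q <= 2 * t + 1 -> i <= size p ->
  within (ev (take i p)) (ev (p ++ take t q)) -> area_le Rl (p ++ q) r (n ^ 6).
Proof.
rewrite /perim => T Hn Hpq Hrq Ht Hi [c [Gc Sc]]; rewrite -evalw_cat => Ec.
have [Gp Gq Gr E] := T; have Hr := word_triangle_size T.
have Htq : t <= size q by lia.
have [Gtp Gdp Stp Sdp] := geodesic_word_split Gp Hi.
have [Gtq Gdq Stq Sdq] := geodesic_word_split Gq Htq.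
have Ec' : ev (drop i p ++ take t q) = ev c.
  by apply: (evalw_lcancel LC (x := take i p)); rewrite catA cat_take_drop Ec.
have [s [Gs Es Ss]] := exists_geodesic_word gen (take i p ++ c).
have Es2 : ev (s ++ drop t q) = ev r.
  by rewrite evalw_cat Es Ec -evalw_cat -catA cat_take_drop E.
have Hr' := Gr _ Es2; rewrite !size_cat in Ss Hr'.
have TA : word_triangle (drop i p) (take t q) c by [].
have [small | large] := leqP (6 * (i + size c + size s)) (5 * n + slack).
  have TB : word_triangle (take i p) c s by split; rewrite ?Es.
  have TC : word_triangle s (drop t q) r by [].
  apply: (area_le_three_triangles TA TB TC) => [? ? ? HA HB HC | | | |];
    [exact: area_le_cut_p_q_left HA HB HC | rewrite /perim; lia..].
have [e [Ge Ee Se]] := exists_geodesic_word gen (c ++ drop t q).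
have Ee2 : ev (take i p ++ e) = ev r.
  by rewrite evalw_cat Ee -evalw_cat catA evalw_cat Ec -evalw_cat -catA cat_take_drop E.
have Hr'' := Gr _ Ee2; rewrite !size_cat in Se Hr''.
have TB : word_triangle c (drop t q) e by split; rewrite ?Ee.
have TC : word_triangle (take i p) e r by [].
apply: (area_le_three_triangles TA TB TC) => [? ? ? HA HB HC | | | |];
  [exact: area_le_cut_p_q_right HA HB HC | rewrite /perim; lia..].
Qed.

Lemma area_le_halve_q_toward_r p q r t j :
  word_triangle p q r -> perim p q r = n -> size p < size q -> size r < size q ->
  2 * t <= size q <= 2 * t + 1 -> j <= size r ->
  within (ev (p ++ take t q)) (ev (take j r)) -> area_le Rl (p ++ q) r (n ^ 6).
Proof.
rewrite /perim => T Hn Hpq Hrq Ht Hj [c [Gc Sc]]; rewrite -evalw_cat => Ec.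
have [Gp Gq Gr E] := T; have Hr := word_triangle_size T.
have Htq : t <= size q by lia.
have [Gtq Gdq Stq Sdq] := geodesic_word_split Gq Htq.
have [Gtr Gdr Str Sdr] := geodesic_word_split Gr Hj.
have [s [Gs Es Ss]] := exists_geodesic_word gen (take t q ++ c).
have Es1 : ev (p ++ s) = ev (take j r).
  by rewrite evalw_cat Es -evalw_cat catA Ec.
have Ec' : ev (c ++ drop j r) = ev (drop t q).
  apply: (evalw_lcancel LC (x := p ++ take t q)).
  by rewrite catA evalw_cat Ec -evalw_cat cat_take_drop -catA cat_take_drop E.
have Hc := Gdq _ Ec'; rewrite !size_cat in Ss Hc.
have TA : word_triangle (take t q) c s by split; rewrite ?Es.
have TB : word_triangle p s (take j r) by [].
have TC : word_triangle c (drop j r) (drop t q) by [].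
apply: (area_le_three_triangles TA TB TC) => [? ? ? HA HB HC | | | |];
  [exact: area_le_cut_q_r HA HB HC | rewrite /perim; lia..].
Qed.

Lemma area_le_halve_r p q r : word_triangle p q r -> perim p q r = n ->
  size p <= size r -> size q <= size r -> area_le Rl (p ++ q) r (n ^ 6).
Proof.
move=> T Hn Hpr Hqr; have Hj : 2 * (size r %/ 2) <= size r <= 2 * (size r %/ 2) + 1 by lia.
have [[i Hi W] | [t Ht W]] := thin_side_r LC delta_le_dd SH T (leq_div _ 2).
  exact: area_le_halve_r_toward_p Hj Hi W.
exact: area_le_halve_r_toward_q Hj Ht W.
Qed.

Lemma area_le_halve_p p q r : word_triangle p q r -> perim p q r = n ->
  size q <= size p -> size r < size p -> area_le Rl (p ++ q) r (n ^ 6).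
Proof.
move=> T Hn Hqp Hrp; have Hi : 2 * (size p %/ 2) <= size p <= 2 * (size p %/ 2) + 1 by lia.
have [[j Hj W] | [t Ht W]] := thin_side_p LC delta_le_dd SH T (leq_div _ 2).
  exact: area_le_halve_p_toward_r Hi Hj W.
exact: area_le_halve_p_toward_q Hi Ht W.
Qed.

Lemma area_le_halve_q p q r : word_triangle p q r -> perim p q r = n ->
  size p < size q -> size r < size q -> area_le Rl (p ++ q) r (n ^ 6).
Proof.
move=> T Hn Hpq Hrq; have Ht : 2 * (size q %/ 2) <= size q <= 2 * (size q %/ 2) + 1 by lia.
have [[i Hi W] | [j Hj W]] := thin_side_q LC delta_le_dd SH T (leq_div _ 2).
  exact: area_le_halve_q_toward_p Ht Hi W.
exact: area_le_halve_q_toward_r Ht Hj W.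
Qed.

End InductionStep.

Lemma triangle_area_below_all n : triangle_area_below n.
Proof.
elim: n => [|n IH] p q r T Hlt //.
have [/(IH _ _ _ T) // | Hge] := ltnP (perim p q r) n.
have En : perim p q r = n by lia.
rewrite En; have [[Gp Gq Gr E] Hr] := (T, word_triangle_size T).
have [Hsmall | Hlarge] := ltnP n (short_len dd).
  case: n {IH Hlt Hge} En Hsmall => [|n] En Hsmall.
    move/eqP: En; rewrite /perim !addn_eq0 !size_eq0.
    by case/andP => /andP [/eqP -> /eqP ->] /eqP ->; apply: area_le_refl.
  apply: (area_le_mono (k := 1)); first by rewrite expn_gt0.
  by apply: area_short => //; rewrite ?size_cat; move: En; rewrite /perim; lia.
have [Hpr | Hrp] := leqP (size p) (size r).
  have [Hqr | Hrq] := leqP (size q) (size r); first exact: area_le_halve_r.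
  by apply: area_le_halve_q => //; lia.
have [Hqp | Hpq] := leqP (size q) (size p); first exact: area_le_halve_p.
by apply: area_le_halve_q => //; lia.
Qed.

Lemma triangle_area_le p q r : word_triangle p q r ->
  area_le Rl (p ++ q) r (perim p q r ^ 6).
Proof. by move=> T; apply: (triangle_area_below_all T (ltnSn _)). Qed.

Lemma area_le_geodesic w h : geodesic_word gen h -> ev w = ev h ->
  area_le Rl w h (100 * size w ^ 6).
Proof.
have [m Hm] : exists m, size w = m by eexists.
elim/ltn_ind: m w h Hm => m IH w h Hm Gh E.
have Hh := Gh _ E; have [Hw1 | Hw2] := leqP (size w) 1.
  case: w Hw1 E Hh {IH Hm} => [|a [|//]] _ E /= Hh.
    by case: h Hh {Gh E} => // _; apply: area_le_refl.
  by apply: (area_le_mono (k := 1)) => //; apply: area_short => //=; rewrite /short_len; lia.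
pose k := size w %/ 2; have Hk : 2 * k <= size w <= 2 * k + 1 by rewrite /k; lia.
have Stw : size (take k w) = k by rewrite size_takel //; lia.
have Sdw : size (drop k w) = size w - k by rewrite size_drop.
have [g1 [G1 E1 S1]] := exists_geodesic_word gen (take k w).
have [g2 [G2 E2 S2]] := exists_geodesic_word gen (drop k w).
have A1 := IH k ltac:(lia) (take k w) g1 Stw G1 (esym E1).
have A2 := IH (size w - k) ltac:(lia) (drop k w) g2 Sdw G2 (esym E2).
have T : word_triangle g1 g2 h by split; rewrite // -E -(cat_take_drop k w) !evalw_cat E1 E2.
have := area_le_trans (area_le_trans (area_le_catr _ A1) (area_le_catl _ A2)) (triangle_area_le T).
rewrite cat_take_drop; apply: area_le_mono; rewrite Stw Sdw.
have Hp : perim g1 g2 h <= 2 * size w by rewrite /perim; lia.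
have : 100 * k ^ 6 + 100 * (size w - k) ^ 6 + (2 * size w) ^ 6 <= 100 * size w ^ 6.
  by apply: halves_sixth_powers_le; lia.
have := leq_exp2rW 6 Hp; lia.
Qed.

Lemma area_le_evalw u v : ev u = ev v -> area_le Rl u v (100 * (size u + size v) ^ 6).
Proof.
move=> E; have [g [Gg Eg _]] := exists_geodesic_word gen u.
have Au := area_le_geodesic Gg (esym Eg).
have Av := area_le_geodesic Gg (etrans (esym E) (esym Eg)).
apply: area_le_mono (area_le_trans Au (area_le_sym Av)).
by have := addn_expn_le (size u) (size v) (isT : 0 < 6); lia.
Qed.

End TriangleArea.

Lemma InP (T : eqType) (x : T) (s : seq T) : reflect (List.In x s) (x \in s).
Proof.
elim: s => [|y s IH]; first by right.
by rewrite inE; apply: (iffP orP) => [[/eqP -> | /IH] | [-> | /IH]]; [left | right | left | right].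
Qed.

Lemma exists_sublist (X : Type) (P : X -> Prop) (s : seq X) :
  exists s', forall x, List.In x s' <-> List.In x s /\ P x.
Proof.
elim: s => [|y s [s' Hs']]; first by exists [::] => x; split=> [|[]].
have [Py | nPy] := classic (P y); [exists (y :: s') | exists s'];
  by move=> x /=; rewrite Hs'; intuition; subst.
Qed.

Lemma exists_words_upto (A : finType) n :
  exists ws : seq (seq A), forall w, size w <= n -> List.In w ws.
Proof.
elim: n => [|n [ws Hws]]; first by exists [:: [::]] => [] [|//] _; left.
exists ([::] :: [seq a :: w | a <- enum A, w <- ws]) => [] [|a w] Hw; first by left.
right; apply/InP/allpairsP; exists (a, w); split=> //; first by rewrite mem_enum.
exact/InP/Hws.
Qed.

Lemma short_relations (M : monoid) (A : finType) (gen : A -> M) n :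
  exists Rl : seq (seq A * seq A),
    (forall l r, List.In (l, r) Rl -> evalw gen l = evalw gen r) /\
    (forall u v, evalw gen u = evalw gen v -> size u <= n -> size v <= n ->
       List.In (u, v) Rl).
Proof.
have [ws Hws] := exists_words_upto A n.
have [Rl HRl] := exists_sublist (fun uv => evalw gen uv.1 = evalw gen uv.2)
  [seq (u, v) | u <- ws, v <- ws].
exists Rl; split=> [l r /HRl [] // | u v E Hu Hv]; apply/HRl; split=> //.
by apply/InP/allpairsP; exists (u, v); split=> //; apply/InP; [exact: Hws Hu | exact: Hws Hv].
Qed.

Lemma area_le_relation (B : Type) (Rl : seq (seq B * seq B)) u v :
  List.In (u, v) Rl -> area_le Rl u v 1.
Proof.
move=> Huv; exists 1; split=> //; apply: (derivesS (v := v)); last exact: derives0.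
by exists [::], [::], u, v; rewrite !cats0; split=> //; left.
Qed.

Lemma uniform_bound (X : Type) (s : seq X) (Q : X -> nat -> Prop) :
  (forall x k k', k <= k' -> Q x k -> Q x k') ->
  (forall x, List.In x s -> exists k, Q x k) ->
  exists K, forall x, List.In x s -> Q x K.
Proof.
move=> Qmono; elim: s => [|y s IH] Hs; first by exists 0.
have [k Hk] := Hs y (or_introl erefl).
have [K HK] := IH (fun x Hx => Hs x (or_intror Hx)).
exists (k + K) => x [<- | Hx]; first exact: Qmono (leq_addr _ _) Hk.
exact: Qmono (leq_addl _ _) (HK x Hx).
Qed.

Lemma uniform_bound_fin (X : finType) (Q : X -> nat -> Prop) :
  (forall x k k', k <= k' -> Q x k -> Q x k') -> (forall x, exists k, Q x k) ->
  exists K, forall x, Q x K.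
Proof.
move=> Qmono HQ; have [K HK] := uniform_bound (s := enum X) Qmono (fun x _ => HQ x).
by exists K => x; apply/HK/InP; rewrite mem_enum.
Qed.

Section Translation.
Variables (X Y : Type) (f : X -> seq Y).

Definition translate (w : seq X) : seq Y := flatten (map f w).

Lemma translate_cons x w : translate (x :: w) = f x ++ translate w.
Proof. by []. Qed.

Lemma translate_cat u v : translate (u ++ v) = translate u ++ translate v.
Proof. by rewrite /translate map_cat flatten_cat. Qed.

Lemma evalw_translate (M : monoid) (genX : X -> M) (genY : Y -> M) w :
  (forall x, evalw genY (f x) = genX x) -> evalw genY (translate w) = evalw genX w.
Proof. by move=> Ef; elim: w => [|x w IH] //; rewrite translate_cons evalw_cat Ef IH. Qed.

Lemma size_translate_le L w : (forall x, size (f x) <= L) -> size (translate w) <= L * size w.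
Proof. by move=> HL; elim: w => [|x w IH] //; rewrite translate_cons size_cat mulnS leq_add. Qed.

Lemma area_le_translate (RX : seq (seq X * seq X)) (RY : seq (seq Y * seq Y)) cr k u v :
  (forall l r, List.In (l, r) RX -> area_le RY (translate l) (translate r) cr) ->
  area_le RX u v k -> area_le RY (translate u) (translate v) (cr * k).
Proof.
move=> Hcr [k' [Hk D]]; apply: area_le_mono (leq_mul (leqnn cr) Hk) _.
elim: D => [u0 | k0 u0 v0 w0 [x [y [l [r [Hlr [-> ->]]]]]] _ IH].
  by rewrite muln0; apply: area_le_refl.
rewrite mulnS; apply: area_le_trans IH; rewrite !translate_cat; apply: area_le_cat.
by case: Hlr => /Hcr // /area_le_sym.
Qed.

End Translation.

Lemma area_le_translate_letters (Y : Type) (RY : seq (seq Y * seq Y))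
    (h : Y -> seq Y) c w :
  (forall y, area_le RY [:: y] (h y) c) -> area_le RY w (translate h w) (c * size w).
Proof.
move=> Hh; elim: w => [|y w IH]; first by rewrite muln0; apply: area_le_refl.
rewrite translate_cons mulnS -cat1s.
exact: area_le_trans (area_le_catr w (Hh y)) (area_le_catl _ IH).
Qed.

Lemma translate_comp (X Y Z : Type) (f : X -> seq Y) (g : Y -> seq Z) w :
  translate g (translate f w) = translate (fun x => translate g (f x)) w.
Proof. by elim: w => [|x w IH] //; rewrite !translate_cons translate_cat IH. Qed.

Lemma area_le_fin_presentation (M : monoid) (P : fin_presentation M) u v :
  evalw (pgen (f:=P)) u = evalw (pgen (f:=P)) v -> exists k, area_le (prels P) u v k.
Proof. by move/pker => [k D]; exists k, k. Qed.

Lemma area_le_transfer (M : monoid) (A : finType) (gen : A -> M)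
    (RA : seq (seq A * seq A)) (C : nat) (P : fin_presentation M) :
  (forall l r, List.In (l, r) RA -> evalw gen l = evalw gen r) -> generates gen ->
  (forall u v, evalw gen u = evalw gen v -> area_le RA u v (C * (size u + size v) ^ 6)) ->
  exists c1 c2, forall u v, evalw (pgen (f:=P)) u = evalw (pgen (f:=P)) v ->
    area_le (prels P) u v (c1 * (size u + size v) + c2 * (size u + size v) ^ 6).
Proof.
move=> RA_sound Hgen HA.
have [s Es] := @ClassicalEpsilon.choice _ _
  (fun (b : palph P) (w : seq A) => evalw gen w = pgen b) (fun b => Hgen (pgen b)).
have [t Et] := @ClassicalEpsilon.choice _ _
  (fun (a : A) (w : seq (palph P)) => evalw (pgen (f:=P)) w = gen a)
  (fun a => pgen_surj P (gen a)).
have [L HL] : exists L, forall b, size (s b) <= L.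
  apply: uniform_bound_fin => [b k k' Hk Hs | b]; [exact: leq_trans Hs Hk | by exists (size (s b))].
have [cb Hcb] : exists cb, forall b, area_le (prels P) [:: b] (translate t (s b)) cb.
  apply: uniform_bound_fin => [b k k' | b]; first exact: area_le_mono.
  by apply: area_le_fin_presentation; rewrite (evalw_translate _ Et) Es /= mmulm1.
have [cr Hcr] : exists cr, forall lr, List.In lr RA ->
    area_le (prels P) (translate t lr.1) (translate t lr.2) cr.
  apply: uniform_bound => [lr k k' | [l r] /RA_sound E]; first exact: area_le_mono.
  by apply: area_le_fin_presentation; rewrite !(evalw_translate _ Et).
exists cb, (cr * C * L ^ 6) => u v E.
have Esu w : evalw gen (translate s w) = evalw (pgen (f:=P)) w := evalw_translate _ Es.
have Hsz w : size (translate s w) <= L * size w := size_translate_le _ HL.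
have Huv := HA _ _ (etrans (Esu u) (etrans E (esym (Esu v)))).
have Hcore := area_le_translate (fun l r => Hcr (l, r)) Huv.
have Hletters w : area_le (prels P) w (translate t (translate s w)) (cb * size w).
  by rewrite translate_comp; apply: area_le_translate_letters.
have := area_le_trans (area_le_trans (Hletters u) Hcore) (area_le_sym (Hletters v)).
have Hsz6 : (size (translate s u) + size (translate s v)) ^ 6 <= L ^ 6 * (size u + size v) ^ 6.
  by rewrite -expnMn leq_exp2rW // mulnDr leq_add.
apply: area_le_mono; move: Hsz6.
move: ((size (translate s u) + size (translate s v)) ^ 6) ((size u + size v) ^ 6) => S T HS.
have := leq_mul (leqnn (cr * C)) HS; nia.
Qed.

Section RealBounds.
Local Open Scope R_scope.

Lemma dehn_exponent_ge6 : INR 6 <= dehn_exponent.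
Proof.
rewrite /dehn_exponent.
have -> : INR 1 = 1 by [].
have -> : INR 3 = 3 by rewrite /=; ring.
have -> : INR 4 = 4 by rewrite /=; ring.
have -> : INR 6 = 6 by rewrite /=; ring.
have Hl : 0 < ln (4 / 3) by rewrite -ln_1; apply: ln_increasing; lra.
have E5 : INR 5 = 5 by rewrite /=; ring.
have H5 : INR 5 * ln (4 / 3) <= ln (INR 5).
  rewrite -ln_pow; last lra.
  by rewrite E5; left; apply: ln_increasing; [apply: pow_lt | rewrite /=]; lra.
rewrite {1}E5 in H5.
have : 5 <= ln (INR 5) / ln (4 / 3).
  apply: (Rmult_le_reg_r (ln (4 / 3))) => //.
  by rewrite /Rdiv Rmult_assoc Rinv_l; lra.
lra.
Qed.

Lemma INR_expn (m e : nat) : INR (m ^ e)%N = INR m ^ e.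
Proof. by elim: e => [|e IH]; rewrite ?expn0 // expnS mult_INR IH. Qed.

Lemma poly6_le_dehn_bound (c1 c2 : nat) : exists a : R, 0 < a /\ forall j : nat,
  INR (c1 * j + c2 * j ^ 6)%N <= a * Rpower (a * INR j) dehn_exponent + a * INR j.
Proof.
pose a := INR c1 + INR c2 + 1; have H1 := pos_INR c1; have H2 := pos_INR c2.
exists a; split=> [|j]; first by rewrite /a; lra.
have Hj := pos_INR j.
rewrite plus_INR 2!mult_INR INR_expn.
have [-> | j_pos] := posnP j.
  have : 0 < Rpower (a * INR 0) dehn_exponent by apply: exp_pos.
  by move: (Rpower _ _) => X /=; rewrite /a; nra.
have Hj1 : 1 <= INR j by apply: (le_INR 1); apply/leP.
have Haj : 1 <= a * INR j by rewrite /a; nra.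
have Hp : (a * INR j) ^ 6 <= Rpower (a * INR j) dehn_exponent.
  rewrite -Rpower_pow; last lra.
  exact: Rle_Rpower dehn_exponent_ge6.
have Hj6 : INR j ^ 6 <= (a * INR j) ^ 6.
  by apply: pow_incr; split; [lra | rewrite /a; nra].
have : INR c2 * INR j ^ 6 <= a * Rpower (a * INR j) dehn_exponent.
  apply: Rmult_le_compat; try lra; first by apply: pow_le.
  by rewrite /a; lra.
have : INR c1 * INR j <= a * INR j by apply: Rmult_le_compat_r; rewrite /a; lra.
lra.
Qed.

End RealBounds.

Lemma dehn_prec_of_area_le (M : monoid) (P : fin_presentation M) (c1 c2 : nat) :
  (forall u v, evalw (pgen (f:=P)) u = evalw (pgen (f:=P)) v ->
     area_le (prels P) u v (c1 * (size u + size v) + c2 * (size u + size v) ^ 6)) ->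
  dehn_prec P (fun x => Rpower x dehn_exponent).
Proof.
move=> HP; have [a [Ha Hb]] := poly6_le_dehn_bound c1 c2.
exists a; split=> // j u v Hj E; exists (c1 * j + c2 * j ^ 6); split; last exact: Hb.
apply: area_le_mono (HP u v E); apply: leq_add; first by rewrite leq_mul2l Hj orbT.
by rewrite leq_mul2l leq_exp2rW ?orbT.
Qed.

Lemma exists_nat_bound (delta : R) :
  exists dd : nat, forall n : nat, Rle (INR n) delta -> n <= dd.
Proof.
have [dd Hdd] := INR_unbounded delta; exists dd => n Hn.
by apply/ltnW/ltP/INR_lt; apply: Rle_lt_trans Hn Hdd.
Qed.

Theorem theorem5p6 (M : monoid) (A : finType) (gen : A -> M) (delta : R) :
  Rle 0 delta ->
  left_cancellative M ->
  generates gen ->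
  strongly_hyperbolic gen delta ->
  inhabited (fin_presentation M) /\
  forall P : fin_presentation M, dehn_prec P (fun x => Rpower x dehn_exponent).
Proof.
move=> _ LC Hgen SH.
have [dd delta_le_dd] := exists_nat_bound delta.
have [Rl [Rl_sound Rl_short]] := short_relations gen (short_len dd).
have area_short u v E Hu Hv : area_le Rl u v 1 := area_le_relation (Rl_short u v E Hu Hv).
have area_Rl := area_le_evalw LC delta_le_dd SH area_short.
split=> [|P].
  constructor; apply: (@FinPresentation M A gen Rl Hgen) => u v.
  split=> [/area_Rl [k [_ D]] | [k]]; [by exists k | exact: derives_evalw Rl_sound].
have [c1 [c2 Htransfer]] := area_le_transfer P Rl_sound Hgen area_Rl.
exact: dehn_prec_of_area_le Htransfer.
Qed.
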